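(* Let $T$ be a $\delta$-Jordan Lie supertriple system and $(V,\theta)$ a representation of $T$. Then $T\oplus V$, with degree $|(a,u)|=|a|$ and the triple product $$[(a,u),(b,v),(c,w)]=\big([a,b,c],\ (-1)^{|a|(|b|+|c|)}\theta(b,c)(u)-\delta(-1)^{|b||c|}\theta(a,c)(v)+\delta D(a,b)(w)\big),$$ is a $\delta$-Jordan Lie supertriple system.
   Context: A $\delta$-Jordan Lie supertriple system ($\delta\in\{1,-1\}$) is a $\mathbb{Z}_2$-graded vector space $T=T_{\bar 0}\oplus T_{\bar 1}$ with a trilinear product $[\cdot,\cdot,\cdot]$ such that, for all homogeneous $a,b,c,d,e$ (with $|a|$ the degree of $a$): $|[a,b,c]|=|a|+|b|+|c|$; $[b,a,c]=-\delta(-1)^{|a||b|}[a,b,c]$; $(-1)^{|a||c|}[a,b,c]+(-1)^{|b||a|}[b,c,a]+(-1)^{|c||b|}[c,a,b]=0$; and $[a,b,[c,d,e]]=[[a,b,c],d,e]+(-1)^{|c|(|a|+|b|)}[c,[a,b,d],e]+\delta(-1)^{(|a|+|b|)(|c|+|d|)}[c,d,[a,b,e]]$. A representation of $T$ is a pair $(V,\theta)$ where $V$ is a $\mathbb{Z}_2$-graded vector space and $\theta:T\otimes T\to End(V)$ is bilinear such that, writing $D(a,b)=(-1)^{|a||b|}\theta(b,a)-\delta\theta(a,b)$, for all homogeneous $a,b,c,d\in T$: (R1) $(-1)^{(|a|+|b|)(|c|+|d|)}\theta(c,d)\theta(a,b)-\delta(-1)^{|a||b|+|d|(|c|+|a|)}\theta(b,d)\theta(a,c)-\theta(a,[b,c,d])+(-1)^{|a|(|b|+|c|)}D(b,c)\theta(a,d)=0$;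 (R2) $\delta(-1)^{(|a|+|b|)(|c|+|d|)}\theta(c,d)D(a,b)-\delta D(a,b)\theta(c,d)+\theta([a,b,c],d)+\delta(-1)^{|c|(|a|+|b|)}\theta(c,[a,b,d])=0$; (R3) $D([a,b,c],d)+(-1)^{|c|(|a|+|b|)}D(c,[a,b,d])-\delta D(a,b)D(c,d)+(-1)^{(|a|+|b|)(|c|+|d|)}D(c,d)D(a,b)=0$. *)

From HB Require Import structures.
From mathcomp Require Import all_boot all_order all_algebra.
Set Implicit Arguments. Unset Strict Implicit. Unset Printing Implicit Defensive.
Import GRing.Theory.
Local Open Scope ring_scope.

(* Conventions.
   - A Z_2-graded vector space over the field K is an lmodType T together with
     the linear idempotent projection [par] onto the even part T_0 along T_1:
     x is homogeneous of degree false (= 0) iff par x = x, and homogeneous of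
     degree true (= 1) iff par x = 0.
   - Degrees are booleans; addition of degrees is [addb], product is [&&].
   - sg b := (-1)^b. *)

Section Defs.
Variable K : fieldType.

Definition sg (b : bool) : K := (-1) ^+ b.

Definition graded (T : lmodType K) (par : T -> T) : Prop :=
  (forall (k : K) (x y : T), par (k *: x + y) = k *: par x + par y) /\
  (forall x, par (par x) = par x).

Definition hom (T : lmodType K) (par : T -> T) (d : bool) (x : T) : Prop :=
  if d then par x = 0 else par x = x.

Definition comp (T : lmodType K) (par : T -> T) (d : bool) (x : T) : T :=
  if d then x - par x else par x.

Definition bsum (M : zmodType) (f : bool -> M) : M := f false + f true.

Definition trilinear (T : lmodType K) (br : T -> T -> T -> T) : Prop :=
  (forall k a a' b c, br (k *: a + a') b c = k *: br a b c + br a' b c) /\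
  (forall k a b b' c, br a (k *: b + b') c = k *: br a b c + br a b' c) /\
  (forall k a b c c', br a b (k *: c + c') = k *: br a b c + br a b c').

Definition JLSTS (T : lmodType K) (par : T -> T) (delta : K)
    (br : T -> T -> T -> T) : Prop :=
  graded par /\ trilinear br /\
  (forall da db dc a b c, hom par da a -> hom par db b -> hom par dc c ->
     hom par (da (+) db (+) dc) (br a b c)) /\
  (forall da db a b c, hom par da a -> hom par db b ->
     br b a c = - (delta * sg (da && db)) *: br a b c) /\
  (forall da db dc a b c, hom par da a -> hom par db b -> hom par dc c ->
     sg (da && dc) *: br a b c + sg (db && da) *: br b c a
     + sg (dc && db) *: br c a b = 0) /\
  (forall da db dc dd a b c d e,
     hom par da a -> hom par db b -> hom par dc c -> hom par dd d ->
     (forall de, hom par de e ->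
     br a b (br c d e) = br (br a b c) d e
        + sg (dc && (da (+) db)) *: br c (br a b d) e
        + (delta * sg ((da (+) db) && (dc (+) dd))) *: br c d (br a b e))).

Definition Dop (T V : lmodType K) (delta : K) (theta : T -> T -> V -> V)
    (da db : bool) (a b : T) (v : V) : V :=
  sg (da && db) *: theta b a v - delta *: theta a b v.

Definition representation (T : lmodType K) (par : T -> T) (delta : K)
    (br : T -> T -> T -> T) (V : lmodType K) (parV : V -> V)
    (theta : T -> T -> V -> V) : Prop :=
  graded parV /\
  (forall a b k u v, theta a b (k *: u + v) = k *: theta a b u + theta a b v) /\
  (forall k a a' b u, theta (k *: a + a') b u = k *: theta a b u + theta a' b u) /\
  (forall k a b b' u, theta a (k *: b + b') u = k *: theta a b u + theta a b' u) /\
  (forall da db du a b u, hom par da a -> hom par db b -> hom parV du u ->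
     hom parV (da (+) db (+) du) (theta a b u)) /\
  let D := Dop delta theta in
  (forall da db dc dd a b c d, hom par da a -> hom par db b ->
     hom par dc c -> hom par dd d -> forall v : V,
   (* R1 *)
   sg ((da (+) db) && (dc (+) dd)) *: theta c d (theta a b v)
   - (delta * sg ((da && db) (+) (dd && (dc (+) da)))) *: theta b d (theta a c v)
   - theta a (br b c d) v
   + sg (da && (db (+) dc)) *: D db dc b c (theta a d v) = 0
   /\
   (* R2 *)
   (delta * sg ((da (+) db) && (dc (+) dd))) *: theta c d (D da db a b v)
   - delta *: D da db a b (theta c d v)
   + theta (br a b c) d v
   + (delta * sg (dc && (da (+) db))) *: theta c (br a b d) v = 0
   /\
   (* R3 *)
   D (da (+) db (+) dc) dd (br a b c) d v
   + sg (dc && (da (+) db)) *: D dc (da (+) db (+) dd) c (br a b d) v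
   - delta *: D da db a b (D dc dd c d v)
   + sg ((da (+) db) && (dc (+) dd)) *: D dc dd c d (D da db a b v) = 0).

(* The grading on T (+) V: |(a,u)| = |a|, homogeneous elements being pairs
   of homogeneous elements of equal degree. *)
Definition parTV (T V : lmodType K) (par : T -> T) (parV : V -> V)
    (x : T * V) : T * V := (par x.1, parV x.2).

Definition brTV_hom (T V : lmodType K) (delta : K) (br : T -> T -> T -> T)
    (theta : T -> T -> V -> V) (da db dc : bool) (x y z : T * V) : T * V :=
  let: (a, u) := x in let: (b, v) := y in let: (c, w) := z in
  (br a b c,
   sg (da && (db (+) dc)) *: theta b c u
   - (delta * sg (db && dc)) *: theta a c v
   + delta *: Dop delta theta da db a b w).

(* Trilinear extension to all of T (+) V via homogeneous components. *)
Definition brTV (T V : lmodType K) (par : T -> T) (parV : V -> V) (delta : K)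
    (br : T -> T -> T -> T) (theta : T -> T -> V -> V) (x y z : T * V) :
    T * V :=
  let cp d := comp (parTV par parV) d in
  bsum (fun da => bsum (fun db => bsum (fun dc =>
    brTV_hom delta br theta da db dc (cp da x) (cp db y) (cp dc z)))).

End Defs.

From mathcomp Require Import all_boot all_order all_algebra.
Import GRing.Theory.
Local Open Scope ring_scope.
Set Implicit Arguments. Unset Strict Implicit.

(* On homogeneous elements the bracket of T (+) V has T-component [a,b,c], so
   every axiom for T (+) V is the corresponding axiom for T together with an
   identity in V. For skew-symmetry and the cyclic identity that identity is a
   formal one between signed combinations of operators theta(x,y) applied to
   the V-entries, valid as soon as delta^2 = 1. For the fundamental identity the
   V-component of the difference of the two sides is linear in the five
   V-entries u, v, w, s, t, and the part in each entry is, up to sign, an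
   instance of a representation axiom: (R1) for u and v, (R2) for w and s,
   (R3) for t. The bracket on arbitrary elements is the trilinear extension
   through homogeneous components, so trilinearity is inherited. *)

(* Decides [l = r] in a K-module when [l] and [r] are built from atoms by
   [+], [-], [0] and scaling by ring expressions in signs [sg K b], [b] a
   xor/and-expression in boolean atoms: the integer coefficient of every
   atom is compared under every assignment of the boolean atoms. *)
Module SignedComb.

Inductive bexpr := BVar of nat | BXor of bexpr & bexpr | BAnd of bexpr & bexpr.

Fixpoint beval (env : seq bool) (b : bexpr) : bool :=
  match b with
  | BVar i => nth false env i
  | BXor x y => beval env x (+) beval env y
  | BAnd x y => beval env x && beval env y
  end.

Inductive cexpr :=
  | CZero | COne | CSg of bexpr | CAdd of cexpr & cexpr | CMul of cexpr & cexpr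
  | COpp of cexpr.

Fixpoint cint (env : seq bool) (c : cexpr) : int :=
  match c with
  | CZero => 0
  | COne => 1
  | CSg b => if beval env b then -1 else 1
  | CAdd x y => cint env x + cint env y
  | CMul x y => cint env x * cint env y
  | COpp x => - cint env x
  end.

Inductive vexpr :=
  | VZero | VAtom of nat | VAdd of vexpr & vexpr | VOpp of vexpr
  | VScale of cexpr & vexpr.

Fixpoint vcoef (e : vexpr) (i : nat) : cexpr :=
  match e with
  | VZero => CZero
  | VAtom j => if i == j then COne else CZero
  | VAdd x y => CAdd (vcoef x i) (vcoef y i)
  | VOpp x => COpp (vcoef x i)
  | VScale c x => CMul c (vcoef x i)
  end.

Fixpoint all_envs (n : nat) : seq (seq bool) :=
  if n is n'.+1 then [seq b :: env | b <- [:: false; true], env <- all_envs n']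
  else [:: [::]].

Definition same_coefs (n m : nat) (e1 e2 : vexpr) : bool :=
  all (fun env => all (fun i => cint env (vcoef e1 i) == cint env (vcoef e2 i))
                      (iota 0 m)) (all_envs n).

Lemma mem_all_envs env : env \in all_envs (size env).
Proof.
elim: env => [|b env IH] //=.
by case: b; rewrite !mem_cat (map_f _ IH) ?orbT.
Qed.

Section Eval.
Variables (K : fieldType) (W : lmodType K).

Fixpoint cval (env : seq bool) (c : cexpr) : K :=
  match c with
  | CZero => 0
  | COne => 1
  | CSg b => sg K (beval env b)
  | CAdd x y => cval env x + cval env y
  | CMul x y => cval env x * cval env y
  | COpp x => - cval env x
  end.

Fixpoint vval (env : seq bool) (atoms : seq W) (e : vexpr) : W :=
  match e with
  | VZero => 0
  | VAtom i => nth 0 atoms i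
  | VAdd x y => vval env atoms x + vval env atoms y
  | VOpp x => - vval env atoms x
  | VScale c x => cval env c *: vval env atoms x
  end.

Lemma cvalE env c : cval env c = (cint env c)%:~R.
Proof.
elim: c => //= [b|x -> y ->|x -> y ->|x ->]; rewrite ?intrD ?intrM ?intrN //.
by rewrite /sg; case: beval; rewrite ?expr1 ?expr0.
Qed.

Lemma vvalE env atoms e :
  vval env atoms e = \sum_(i < size atoms) cval env (vcoef e i) *: atoms`_i.
Proof.
elim: e => /= [|j|x -> y ->|x ->|c x ->].
- by rewrite big1 // => i _; rewrite scale0r.
- have [lt_j|le_j] := ltnP j (size atoms).
    rewrite (bigD1 (Ordinal lt_j)) //= eqxx scale1r big1 ?addr0 // => i ne_ij.
    by rewrite ifN ?scale0r // -(inj_eq val_inj).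
  rewrite nth_default // big1 // => i _; rewrite ifN ?scale0r //.
  by apply: contraTN (ltn_ord i) => /eqP ->; rewrite -leqNgt.
- by rewrite -big_split; apply: eq_bigr => i _; rewrite scalerDl.
- by rewrite -sumrN; apply: eq_bigr => i _; rewrite scaleNr.
- by rewrite scaler_sumr; apply: eq_bigr => i _; rewrite scalerA.
Qed.

Lemma same_coefsP env atoms e1 e2 :
  same_coefs (size env) (size atoms) e1 e2 -> vval env atoms e1 = vval env atoms e2.
Proof.
move=> /allP/(_ env (mem_all_envs env))/allP same; rewrite !vvalE.
apply: eq_bigr => i _; rewrite !cvalE.
by rewrite (eqP (same i _)) // mem_iota add0n ltn_ord.
Qed.

End Eval.

(* An environment is a list of (index, term) pairs, newest first, with its size. *)
Ltac lookup x env :=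
  lazymatch env with
  | nil => constr:(@None nat)
  | cons (?i, ?y) ?env' =>
      lazymatch constr:((x, y)) with
      | (?z, ?z) => constr:(Some i)
      | _ => lookup x env'
      end
  end.

Ltac atom x env :=
  lazymatch env with (?l, ?n) =>
    lazymatch lookup x l with
    | Some ?i => constr:((i, env))
    | None => constr:((n, ((n, x) :: l, S n)))
    end
  end.

Ltac reify_bool b benv :=
  lazymatch b with
  | addb ?x ?y =>
      lazymatch reify_bool x benv with (?ex, ?benv) =>
      lazymatch reify_bool y benv with (?ey, ?benv) =>
        constr:((BXor ex ey, benv)) end end
  | andb ?x ?y =>
      lazymatch reify_bool x benv with (?ex, ?benv) =>
      lazymatch reify_bool y benv with (?ey, ?benv) =>
        constr:((BAnd ex ey, benv)) end end
  | _ => lazymatch atom b benv with (?i, ?benv) => constr:((BVar i, benv)) end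
  end.

Ltac reify_coef c benv :=
  lazymatch c with
  | GRing.zero => constr:((CZero, benv))
  | GRing.one => constr:((COne, benv))
  | sg _ ?b => lazymatch reify_bool b benv with (?e, ?benv) => constr:((CSg e, benv)) end
  | ?x + ?y =>
      lazymatch reify_coef x benv with (?ex, ?benv) =>
      lazymatch reify_coef y benv with (?ey, ?benv) =>
        constr:((CAdd ex ey, benv)) end end
  | ?x * ?y =>
      lazymatch reify_coef x benv with (?ex, ?benv) =>
      lazymatch reify_coef y benv with (?ey, ?benv) =>
        constr:((CMul ex ey, benv)) end end
  | - ?x => lazymatch reify_coef x benv with (?ex, ?benv) => constr:((COpp ex, benv)) end
  end.

Ltac reify_vec t envs :=
  lazymatch envs with (?benv, ?aenv) =>
  lazymatch t with
  | GRing.zero => constr:((VZero, envs))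
  | ?x + ?y =>
      lazymatch reify_vec x envs with (?ex, ?envs) =>
      lazymatch reify_vec y envs with (?ey, ?envs) =>
        constr:((VAdd ex ey, envs)) end end
  | - ?x => lazymatch reify_vec x envs with (?ex, ?envs) => constr:((VOpp ex, envs)) end
  | ?c *: ?x =>
      lazymatch reify_coef c benv with (?ec, ?benv) =>
      lazymatch reify_vec x (benv, aenv) with (?ex, ?envs) =>
        constr:((VScale ec ex, envs)) end end
  | _ => lazymatch atom t aenv with (?i, ?aenv) => constr:((VAtom i, (benv, aenv))) end
  end end.

Ltac to_list env acc :=
  lazymatch env with
  | nil => acc
  | cons (_, ?x) ?env' => to_list env' (x :: acc)
  end.

Ltac signed_comb :=
  lazymatch goal with |- @eq ?W ?l ?r =>
  let envs0 := constr:(((@nil (nat * bool), O), (@nil (nat * W), O))) in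
  lazymatch reify_vec l envs0 with (?el, ?envs) =>
  lazymatch reify_vec r envs with (?er, ((?benv, _), (?aenv, _))) =>
    let bs := to_list benv (@nil bool) in
    let xs := to_list aenv (@nil W) in
    change (vval bs xs el = vval bs xs er);
    apply: same_coefsP; vm_compute; reflexivity
  end end end.

End SignedComb.

Section LinearAlgebra.
Variable K : fieldType.

Lemma pairD (T V : lmodType K) (a b : T) (u v : V) : (a, u) + (b, v) = (a + b, u + v).
Proof. by []. Qed.

Lemma pairZ (T V : lmodType K) (k : K) (a : T) (u : V) : k *: (a, u) = (k *: a, k *: u).
Proof. by []. Qed.

Lemma pair0 (T V : lmodType K) : (0 : T * V) = (0, 0).
Proof. by []. Qed.

Section LinearFun.
Variables (U W : lmodType K) (f : U -> W).
Hypothesis lin_f : linear f.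

Lemma lin0 : f 0 = 0.
Proof. by have := zmod_morphism_linear lin_f 0 0; rewrite subrr => ->; rewrite subrr. Qed.

Lemma linD : {morph f : x y / x + y}.
Proof. by move=> x y; rewrite -[x]scale1r lin_f !scale1r. Qed.

Lemma linB : {morph f : x y / x - y}.
Proof. exact: zmod_morphism_linear. Qed.

Lemma linZ k : {morph f : x / k *: x}.
Proof. exact: scalable_linear. Qed.

End LinearFun.

Lemma scale_comb2 (W : lmodType K) (k p q : K) (X X' Y Y' : W) :
  p *: (k *: X + X') - q *: (k *: Y + Y') = k *: (p *: X - q *: Y) + (p *: X' - q *: Y').
Proof.
by rewrite scalerBr !scalerDr opprD addrACA !scalerA (mulrC p) (mulrC q).
Qed.

Lemma scale_comb3 (W : lmodType K) (k p q r : K) (X X' Y Y' Z Z' : W) :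
  p *: (k *: X + X') - q *: (k *: Y + Y') + r *: (k *: Z + Z') =
  k *: (p *: X - q *: Y + r *: Z) + (p *: X' - q *: Y' + r *: Z').
Proof.
by rewrite scale_comb2 [r *: _]scalerDr scalerA (mulrC r) -scalerA addrACA -scalerDr.
Qed.

Lemma eq_of_subr_comb (W : lmodType K) (x y r1 r2 r3 r4 r5 : W) (c1 c2 c3 c4 c5 : K) :
  r1 = 0 -> r2 = 0 -> r3 = 0 -> r4 = 0 -> r5 = 0 ->
  x - y = c1 *: r1 + c2 *: r2 + c3 *: r3 + c4 *: r4 + c5 *: r5 -> x = y.
Proof. by move=> -> -> -> -> ->; rewrite !scaler0 !addr0 => /eqP; rewrite subr_eq0 => /eqP. Qed.

Section Trilinear.
Variables (W : lmodType K) (f : W -> W -> W -> W).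
Hypothesis tri_f : trilinear f.

Lemma trilinear0l y z : f 0 y z = 0.
Proof.
case: tri_f => lin_l _.
exact: (lin0 (f := fun x => f x y z) (fun k x x' => lin_l k x x' y z)).
Qed.

Lemma trilinear0m x z : f x 0 z = 0.
Proof.
case: tri_f => _ [lin_m _].
exact: (lin0 (f := fun y => f x y z) (fun k y y' => lin_m k x y y' z)).
Qed.

Lemma trilinear0r x y : f x y 0 = 0.
Proof. by case: tri_f => _ [_ lin_r]; exact: (lin0 (fun k => lin_r k x y)). Qed.

End Trilinear.

Lemma trilinear_bsum (W : lmodType K) (F : bool -> W -> W -> W -> W) :
  (forall d, trilinear (F d)) -> trilinear (fun x y z => bsum (fun d => F d x y z)).
Proof.
move=> triF; rewrite /bsum.
have [[Fl0 [Fm0 Fr0]] [Fl1 [Fm1 Fr1]]] := (triF false, triF true).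
split; [|split] => k ? ? ? ?; rewrite ?Fl0 ?Fl1 ?Fm0 ?Fm1 ?Fr0 ?Fr1 scalerDr addrACA //.
Qed.

Lemma trilinear_comp (W : lmodType K) (f : W -> W -> W -> W) (g1 g2 g3 : W -> W) :
  trilinear f -> linear g1 -> linear g2 -> linear g3 ->
  trilinear (fun x y z => f (g1 x) (g2 y) (g3 z)).
Proof.
move=> [fl [fm fr]] lin1 lin2 lin3.
by split; [|split] => k ? ? ? ?; rewrite ?lin1 ?lin2 ?lin3 ?fl ?fm ?fr.
Qed.

End LinearAlgebra.

Section Graded.
Variables (K : fieldType) (W : lmodType K) (p : W -> W).

Lemma comp_hom d x : hom p d x -> comp p d x = x.
Proof. by case: d; rewrite /hom /comp => ->; rewrite ?subr0. Qed.

Lemma comp_homN d x : hom p d x -> comp p (~~ d) x = 0.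
Proof. by case: d; rewrite /hom /comp => -> //; rewrite subrr. Qed.

Hypothesis grad_p : graded p.

Lemma comp_linear d : linear (comp p d).
Proof.
case: grad_p => lin_p _ k x y; case: d; rewrite /comp lin_p //.
by rewrite opprD addrACA -scalerBr.
Qed.

Lemma hom_comb d k x y : hom p d x -> hom p d y -> hom p d (k *: x + y).
Proof.
by case: grad_p => lin_p _; case: d; rewrite /hom lin_p => -> ->; rewrite ?scaler0 ?addr0.
Qed.

Lemma hom0 d : hom p d 0.
Proof. by case: grad_p => lin_p _; case: d; rewrite /hom (lin0 lin_p). Qed.

Lemma homZ d k x : hom p d x -> hom p d (k *: x).
Proof. by move=> hx; rewrite -[_ *: x]addr0; apply: hom_comb => //; apply: hom0. Qed.

Lemma homD d x y : hom p d x -> hom p d y -> hom p d (x + y).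
Proof. by move=> hx hy; rewrite -[x]scale1r; apply: hom_comb. Qed.

Lemma homB d x y : hom p d x -> hom p d y -> hom p d (x - y).
Proof. by move=> hx hy; rewrite -scaleN1r addrC; apply: hom_comb. Qed.

End Graded.

Section SplitNullExtension.
Variables (K : fieldType) (delta : K) (T : lmodType K) (par : T -> T)
  (br : T -> T -> T -> T) (V : lmodType K) (parV : V -> V)
  (theta : T -> T -> V -> V).
Hypotheses (delta_sign : delta = 1 \/ delta = -1)
  (jlsts_T : JLSTS par delta br) (rep_V : representation par delta br parV theta).

Let par_graded := let: conj g _ := jlsts_T in g.
Let br_trilinear := let: conj _ (conj t _) := jlsts_T in t.
Let br_hom := let: conj _ (conj _ (conj h _)) := jlsts_T in h.
Let br_skew := let: conj _ (conj _ (conj _ (conj s _))) := jlsts_T in s.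
Let br_cyclic := let: conj _ (conj _ (conj _ (conj _ (conj c _)))) := jlsts_T in c.
Let br_fundamental := let: conj _ (conj _ (conj _ (conj _ (conj _ f)))) := jlsts_T in f.
Let parV_graded := let: conj g _ := rep_V in g.
Let theta_linear_r := let: conj _ (conj l _) := rep_V in l.
Let theta_linear_l := let: conj _ (conj _ (conj l _)) := rep_V in l.
Let theta_linear_m := let: conj _ (conj _ (conj _ (conj l _))) := rep_V in l.
Let theta_hom := let: conj _ (conj _ (conj _ (conj _ (conj h _)))) := rep_V in h.
Let rep_relations := let: conj _ (conj _ (conj _ (conj _ (conj _ r)))) := rep_V in r.

Notation D := (Dop delta theta).
Notation parW := (parTV par parV).
Notation brW := (brTV par parV delta br theta).
Notation bh := (brTV_hom delta br theta).

(* Turns delta into a sign for [sign_comb]; in characteristic 2 both readings agree. *)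
Lemma delta_sg : delta = sg K (delta == -1).
Proof.
rewrite /sg; case: delta_sign => ->; last by rewrite eqxx expr1.
by case: eqP => [|_]; rewrite ?expr1.
Qed.

Ltac sign_comb := rewrite delta_sg; SignedComb.signed_comb.

Lemma thetaD a b : {morph theta a b : u v / u + v}.
Proof. exact: (linD (f := theta a b) (theta_linear_r a b)). Qed.

Lemma thetaB a b : {morph theta a b : u v / u - v}.
Proof. exact: (linB (f := theta a b) (theta_linear_r a b)). Qed.

Lemma thetaZ a b k : {morph theta a b : u / k *: u}.
Proof. exact: (linZ (f := theta a b) (theta_linear_r a b)). Qed.

Lemma D_linear_l d1 d2 k a a' b v :
  D d1 d2 (k *: a + a') b v = k *: D d1 d2 a b v + D d1 d2 a' b v.
Proof. by rewrite /Dop theta_linear_l theta_linear_m scale_comb2. Qed.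

Lemma D_linear_m d1 d2 k a b b' v :
  D d1 d2 a (k *: b + b') v = k *: D d1 d2 a b v + D d1 d2 a b' v.
Proof. by rewrite /Dop theta_linear_l theta_linear_m scale_comb2. Qed.

Lemma D_linear_r d1 d2 k a b u v :
  D d1 d2 a b (k *: u + v) = k *: D d1 d2 a b u + D d1 d2 a b v.
Proof. by rewrite /Dop !theta_linear_r scale_comb2. Qed.

Lemma hom_parTV d a u : hom parW d (a, u) <-> hom par d a /\ hom parV d u.
Proof. by case: d; rewrite /hom /parTV; split=> [[-> ->]|[-> ->]]. Qed.

Lemma parTV_graded : graded parW.
Proof.
case: par_graded => lin_par par_id; case: parV_graded => lin_parV parV_id.
by split=> [k [a u] [b v]|[a u]]; rewrite /parTV /= ?lin_par ?lin_parV ?par_id ?parV_id.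
Qed.

Lemma brTV_hom_trilinear da db dc : trilinear (bh da db dc).
Proof.
have [br_l [br_m br_r]] := br_trilinear.
split; [|split] => k [a1 u1] [a2 u2] [a3 u3] [a4 u4];
  rewrite /brTV_hom !pairZ !pairD /=; congr (_, _); rewrite ?br_l ?br_m ?br_r //;
  by rewrite ?theta_linear_l ?theta_linear_m ?theta_linear_r
             ?D_linear_l ?D_linear_m ?D_linear_r scale_comb3.
Qed.

Lemma brTV_trilinear : trilinear brW.
Proof.
apply: trilinear_bsum => da; apply: trilinear_bsum => db; apply: trilinear_bsum => dc.
by apply: trilinear_comp; [exact: brTV_hom_trilinear | exact: (comp_linear parTV_graded _) ..].
Qed.

Lemma brTVE2 da db x y z : hom parW da x -> hom parW db y ->
  brW x y z = bsum (fun dc => bh da db dc x y (comp parW dc z)).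
Proof.
move=> hx hy; rewrite /brTV /bsum.
case: da hx => hx; case: db hy => hy;
by rewrite ?(comp_hom hx) ?(comp_homN hx) ?(comp_hom hy) ?(comp_homN hy)
  ?(trilinear0l (brTV_hom_trilinear _ _ _)) ?(trilinear0m (brTV_hom_trilinear _ _ _))
  ?addr0 ?add0r.
Qed.

Lemma brTVE3 da db dc x y z : hom parW da x -> hom parW db y -> hom parW dc z ->
  brW x y z = bh da db dc x y z.
Proof.
move=> hx hy hz; rewrite (brTVE2 _ hx hy) /bsum.
by case: dc hz => hz; rewrite ?(comp_hom hz) ?(comp_homN hz)
  (trilinear0r (brTV_hom_trilinear _ _ _)) ?addr0 ?add0r.
Qed.

Lemma theta_hom_eq d da db du a b u : hom par da a -> hom par db b -> hom parV du u ->
  da (+) db (+) du = d -> hom parV d (theta a b u).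
Proof. by move=> ha hb hu <-; exact: theta_hom. Qed.

Lemma brTV_hom_homogeneous da db dc x y z :
  hom parW da x -> hom parW db y -> hom parW dc z ->
  hom parW (da (+) db (+) dc) (bh da db dc x y z).
Proof.
move: x y z => [a u] [b v] [c w] /hom_parTV[ha hu] /hom_parTV[hb hv] /hom_parTV[hc hw].
apply/hom_parTV; split; first exact: br_hom.
rewrite /Dop; repeat first [apply: (homB parV_graded) | apply: (homD parV_graded)
                           | apply: (homZ parV_graded)].
all: by eapply theta_hom_eq; try eassumption; case: (da); case: (db); case: (dc).
Qed.

Lemma brTV_hom_skew da db dc x y z : hom parW da x -> hom parW db y ->
  bh db da dc y x z = - (delta * sg K (da && db)) *: bh da db dc x y z.
Proof.
move: x y z => [a u] [b v] [c w] /hom_parTV[ha _] /hom_parTV[hb _].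
rewrite /brTV_hom /Dop pairZ; congr (_, _); first exact: br_skew.
sign_comb.
Qed.

Lemma brTV_skew da db x y z : hom parW da x -> hom parW db y ->
  brW y x z = - (delta * sg K (da && db)) *: brW x y z.
Proof.
move=> hx hy; rewrite (brTVE2 _ hy hx) (brTVE2 _ hx hy) /bsum.
by rewrite !(brTV_hom_skew _ _ hx hy) scalerDr.
Qed.

Lemma brTV_cyclic da db dc x y z :
  hom parW da x -> hom parW db y -> hom parW dc z ->
  sg K (da && dc) *: brW x y z + sg K (db && da) *: brW y z x
     + sg K (dc && db) *: brW z x y = 0.
Proof.
move=> hx hy hz; rewrite (brTVE3 hx hy hz) (brTVE3 hy hz hx) (brTVE3 hz hx hy).
move: x y z hx hy hz => [a u] [b v] [c w] /hom_parTV[ha _] /hom_parTV[hb _] /hom_parTV[hc _].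
rewrite /brTV_hom /Dop !pairZ !pairD pair0; congr (_, _); first exact: br_cyclic.
cbn [fst snd]; sign_comb.
Qed.

Lemma brTV_fundamental da db dc dd x1 x2 x3 x4 x5 :
  hom parW da x1 -> hom parW db x2 -> hom parW dc x3 -> hom parW dd x4 ->
  forall de, hom parW de x5 ->
  brW x1 x2 (brW x3 x4 x5) = brW (brW x1 x2 x3) x4 x5
     + sg K (dc && (da (+) db)) *: brW x3 (brW x1 x2 x4) x5
     + (delta * sg K ((da (+) db) && (dc (+) dd))) *: brW x3 x4 (brW x1 x2 x5).
Proof.
move=> h1 h2 h3 h4 de h5.
rewrite (brTVE3 h3 h4 h5) (brTVE3 h1 h2 h3) (brTVE3 h1 h2 h4) (brTVE3 h1 h2 h5).
rewrite (brTVE3 h1 h2 (brTV_hom_homogeneous h3 h4 h5))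
  (brTVE3 (brTV_hom_homogeneous h1 h2 h3) h4 h5)
  (brTVE3 h3 (brTV_hom_homogeneous h1 h2 h4) h5)
  (brTVE3 h3 h4 (brTV_hom_homogeneous h1 h2 h5)).
move: x1 x2 x3 x4 x5 h1 h2 h3 h4 h5 => [a u] [b v] [c w] [d s] [e t]
  /hom_parTV[ha _] /hom_parTV[hb _] /hom_parTV[hc _] /hom_parTV[hd _] /hom_parTV[he _].
rewrite /brTV_hom !pairZ !pairD; congr (_, _); cbn [fst snd].
  exact: (br_fundamental ha hb hc hd he).
have [R1_u _] := rep_relations hb hc hd he u.
have [R1_v _] := rep_relations ha hc hd he v.
have [_ [R2_w _]] := rep_relations ha hb hd he w.
have [_ [R2_s _]] := rep_relations ha hb hc he s.
have [_ [_ R3_t]] := rep_relations ha hb hc hd t.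
(* Each coefficient cancels the term of the difference that contains the new
   bracket of the corresponding relation, e.g. theta b [c,d,e] u for R1_u. *)
apply: (eq_of_subr_comb (c1 := - sg K (da && (db (+) dc (+) dd (+) de)))
  (c2 := delta * sg K (db && (dc (+) dd (+) de)))
  (c3 := - (sg K (dc && (da (+) db)) * sg K (dc && (da (+) db (+) dd (+) de))))
  (c4 := delta * sg K (dd && de)) (c5 := - delta) R1_u R1_v R2_w R2_s R3_t).
by rewrite /Dop ?(thetaB, thetaD, thetaZ); sign_comb.
Qed.

Lemma brTV_homogeneous da db dc x y z :
  hom parW da x -> hom parW db y -> hom parW dc z -> hom parW (da (+) db (+) dc) (brW x y z).
Proof. by move=> hx hy hz; rewrite (brTVE3 hx hy hz); exact: brTV_hom_homogeneous. Qed.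

Theorem split_null_extension_JLSTS : JLSTS parW delta brW.
Proof.
exact: (conj parTV_graded (conj brTV_trilinear (conj (@brTV_homogeneous)
         (conj (@brTV_skew) (conj (@brTV_cyclic) (@brTV_fundamental)))))).
Qed.

End SplitNullExtension.

Theorem proposition3p3 (K : fieldType) (delta : K)
  (T : lmodType K) (par : T -> T) (br : T -> T -> T -> T)
  (V : lmodType K) (parV : V -> V) (theta : T -> T -> V -> V) :
  (delta = 1 \/ delta = -1) ->
  JLSTS par delta br ->
  representation par delta br parV theta ->
  JLSTS (parTV par parV) delta (brTV par parV delta br theta).
Proof. exact: split_null_extension_JLSTS. Qed.
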